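(* Let $\pi=(\pi_n^{n+1}\colon(X_{n+1},f_{n+1})\to(X_n,f_n))_{n\ge1}$ be an inverse sequence of equivariant maps and let $(X,f)=\lim_\pi(X_n,f_n)$. Then $CR(f)=\{x=(x_n)_{n\ge1}\in X: x_n\in CR(f_n)\ \text{for all } n\ge1\}$.
   Context: Each $X_n$ is a compact metric space, $f_n$ a continuous self-map, $\pi_n^{n+1}\colon X_{n+1}\to X_n$ continuous with $f_n\circ\pi_n^{n+1}=\pi_n^{n+1}\circ f_{n+1}$. $X=\{(x_n)\in\prod_n X_n:\pi_n^{n+1}(x_{n+1})=x_n\ \forall n\}$ with the product topology and $f((x_n))=(f_n(x_n))$. For a continuous map $g$ of a compact metric space $(Y,d)$, a $\delta$-chain is a finite sequence $(y_i)_{i=0}^k$, $k>0$, with $d(g(y_i),y_{i+1})\le\delta$ for all $i<k$, and $CR(g)$ is the set of $y$ such that for every $\delta>0$ there is a $\delta$-chain with $y_0=y_k=y$. *)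

From Stdlib Require Import Reals List.
Open Scope R_scope.

Definition is_metric_on {Y : Type} (A : Y -> Prop) (d : Y -> Y -> R) : Prop :=
  (forall x y, A x -> A y -> 0 <= d x y) /\
  (forall x y, A x -> A y -> (d x y = 0 <-> x = y)) /\
  (forall x y, A x -> A y -> d x y = d y x) /\
  (forall x y z, A x -> A y -> A z -> d x z <= d x y + d y z).

Definition is_metric {Y : Type} (d : Y -> Y -> R) : Prop :=
  is_metric_on (fun _ => True) d.

Definition metric_open_on {Y : Type} (A : Y -> Prop) (d : Y -> Y -> R)
  (U : Y -> Prop) : Prop :=
  forall x, U x -> exists eps, 0 < eps /\
    forall y, A y -> d x y < eps -> U y.

Definition compact_metric {Y : Type} (d : Y -> Y -> R) : Prop :=
  forall (I : Type) (U : I -> Y -> Prop),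
    (forall i, metric_open_on (fun _ => True) d (U i)) ->
    (forall x, exists i, U i x) ->
    exists l : list I, forall x, exists i, In i l /\ U i x.

Definition continuous_metric {Y Z : Type} (dY : Y -> Y -> R)
  (dZ : Z -> Z -> R) (g : Y -> Z) : Prop :=
  forall x eps, 0 < eps -> exists del, 0 < del /\
    forall y, dY x y < del -> dZ (g x) (g y) < eps.

Definition inv_lim {T : nat -> Type} (pi : forall n, T (S n) -> T n)
  (x : forall n, T n) : Prop :=
  forall n, pi n (x (S n)) = x n.

Definition lim_map {T : nat -> Type} (f : forall n, T n -> T n)
  (x : forall n, T n) : forall n, T n :=
  fun n => f n (x n).

(** [U] (a subset of [A]) is open in the subspace topology of [A] inherited
    from the product topology of [prod_n (T n, d n)]: every point of [U] has a
    basic product neighbourhood (finitely many coordinates constrained) whose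
    trace on [A] lies in [U]. *)
Definition prod_open_on {T : nat -> Type} (d : forall n, T n -> T n -> R)
  (A : (forall n, T n) -> Prop) (U : (forall n, T n) -> Prop) : Prop :=
  forall x, U x -> exists (N : nat) (eps : R), 0 < eps /\
    forall y, A y -> (forall i, (i <= N)%nat -> d i (x i) (y i) < eps) -> U y.

Definition induces_product_topology {T : nat -> Type}
  (d : forall n, T n -> T n -> R) (A : (forall n, T n) -> Prop)
  (D : (forall n, T n) -> (forall n, T n) -> R) : Prop :=
  forall U : (forall n, T n) -> Prop, (forall x, U x -> A x) ->
    (metric_open_on A D U <-> prod_open_on d A U).

Definition CR_on {Y : Type} (A : Y -> Prop) (d : Y -> Y -> R) (g : Y -> Y)
  (y : Y) : Prop :=
  A y /\
  forall delta, 0 < delta ->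
    exists (k : nat) (c : nat -> Y),
      (0 < k)%nat /\ (forall i, (i <= k)%nat -> A (c i)) /\
      c 0%nat = y /\ c k = y /\
      (forall i, (i < k)%nat -> d (g (c i)) (c (S i)) <= delta).

Definition CR {Y : Type} (d : Y -> Y -> R) (g : Y -> Y) (y : Y) : Prop :=
  CR_on (fun _ => True) d g y.

From Stdlib Require Import Reals Lra Lia List IndefiniteDescription Eqdep_dec Classical.
Open Scope R_scope.

(* The inverse limit is compact (a diagonal argument), so D and the product
   uniformity agree uniformly: D-closeness of threads controls closeness at each
   level, and closeness at a single level N (which controls the lower levels
   through the uniformly continuous bonding maps) controls D-closeness.  Hence a
   D-chain projects to a chain at every level.  Conversely, a fine chain of x_M
   in X_M, M large, lifts to a chain of threads truncated at level M; by
   compactness each truncated thread is, at level N, close to a genuine thread,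
   and replacing them by these threads gives a chain of threads that is fine at
   level N, hence a D-chain. *)

Lemma inv_INR_S_pos (j : nat) : 0 < / INR (S j).
Proof. apply Rinv_0_lt_compat, lt_0_INR; lia. Qed.

Lemma inv_INR_S_le (i j : nat) : (i <= j)%nat -> / INR (S j) <= / INR (S i).
Proof. intro hij. apply Rinv_le_contravar; [apply lt_0_INR | apply le_INR]; lia. Qed.

Lemma inv_INR_S_eventually_lt (e : R) :
  0 < e -> exists K, forall j, (K <= j)%nat -> / INR (S j) < e.
Proof.
  intro he. destruct (archimed_cor1 e he) as [K [HK HK0]].
  exists K. intros j hj.
  assert (/ INR (S j) <= / INR K) by (apply Rinv_le_contravar; [apply lt_0_INR | apply le_INR]; lia).
  lra.
Qed.

Lemma counterexample_sequence {A : Type} (P : nat -> A -> Prop) (Q : A -> Prop) :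
  ~ (exists k, forall a, P k a -> Q a) ->
  exists s : nat -> A, forall k, P k (s k) /\ ~ Q (s k).
Proof.
  intro Hn. apply (functional_choice (fun k a => P k a /\ ~ Q a)). intro k.
  apply NNPP. intro Hk. apply Hn. exists k. intros a Pa.
  apply NNPP. intro Qa. apply Hk. exists a. auto.
Qed.

Lemma dist_on_refl {Y : Type} {A : Y -> Prop} {d : Y -> Y -> R} :
  is_metric_on A d -> forall x, A x -> d x x = 0.
Proof. intros [_ [Hd _]] x Ax. apply (Hd x x Ax Ax). reflexivity. Qed.

Lemma dist_on_sym {Y : Type} {A : Y -> Prop} {d : Y -> Y -> R} :
  is_metric_on A d -> forall x y, A x -> A y -> d x y = d y x.
Proof. intros [_ [_ [Hd _]]]. exact Hd. Qed.

Lemma dist_on_triangle {Y : Type} {A : Y -> Prop} {d : Y -> Y -> R} :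
  is_metric_on A d -> forall x y z, A x -> A y -> A z -> d x z <= d x y + d y z.
Proof. intros [_ [_ [_ Hd]]]. exact Hd. Qed.

Lemma dist_refl {Y : Type} {d : Y -> Y -> R} : is_metric d -> forall x, d x x = 0.
Proof. intros Hd x. exact (dist_on_refl Hd x I). Qed.

Lemma dist_sym {Y : Type} {d : Y -> Y -> R} : is_metric d -> forall x y, d x y = d y x.
Proof. intros Hd x y. exact (dist_on_sym Hd x y I I). Qed.

Lemma dist_triangle {Y : Type} {d : Y -> Y -> R} :
  is_metric d -> forall x y z, d x z <= d x y + d y z.
Proof. intros Hd x y z. exact (dist_on_triangle Hd x y z I I I). Qed.

Lemma dist_nonneg {Y : Type} {d : Y -> Y -> R} : is_metric d -> forall x y, 0 <= d x y.
Proof. intros [Hd _] x y. exact (Hd x y I I). Qed.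

Lemma dist_eq0 {Y : Type} {d : Y -> Y -> R} : is_metric d -> forall x y, d x y = 0 -> x = y.
Proof. intros [_ [Hd _]] x y. exact (proj1 (Hd x y I I)). Qed.

Section CompactMetric.
Variables (Y : Type) (d : Y -> Y -> R).
Hypotheses (Hd : is_metric d) (Hc : compact_metric d).

Lemma compact_cluster_point (u : nat -> Y) :
  exists a, forall e, 0 < e -> forall K, exists k, (K <= k)%nat /\ d a (u k) < e.
Proof.
  apply NNPP. intro Hn.
  assert (Hfar : forall a, exists p : R * nat,
            0 < fst p /\ forall k, (snd p <= k)%nat -> fst p <= d a (u k)).
  { intro a. apply NNPP. intro Ha. apply Hn. exists a. intros e he K.
    apply NNPP. intro HK. apply Ha. exists (e, K). split; [exact he|].
    intros k hk. apply Rnot_lt_le. intro hlt. apply HK. exists k. auto. }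
  destruct (functional_choice _ Hfar) as [rK HrK].
  destruct (Hc Y (fun a x => d a x < fst (rK a))) as [l Hl].
  - intros a x hx. exists (fst (rK a) - d a x). split; [lra|].
    intros y _ hy. pose proof (dist_triangle Hd a x y). lra.
  - intro a. exists a. rewrite (dist_refl Hd). apply (HrK a).
  - set (K := list_max (map (fun a => snd (rK a)) l)).
    destruct (Hl (u K)) as [a [Hin Ha]].
    assert (hK : (snd (rK a) <= K)%nat).
    { assert (Hall := proj1 (list_max_le _ K) (le_n K)).
      rewrite Forall_forall in Hall. apply Hall, (in_map (fun a => snd (rK a))), Hin. }
    pose proof (proj2 (HrK a) K hK). lra.
Qed.

Lemma compact_approx_subseq (u : nat -> Y) :
  { p : (nat -> nat) * Y | forall j, (j <= fst p j)%nat /\ d (snd p) (u (fst p j)) < / INR (S j) }.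
Proof.
  apply constructive_indefinite_description.
  destruct (compact_cluster_point u) as [a Ha].
  destruct (functional_choice (fun j k => (j <= k)%nat /\ d a (u k) < / INR (S j))) as [phi Hphi].
  { intro j. exact (Ha _ (inv_INR_S_pos j) j). }
  exists (phi, a). exact Hphi.
Qed.

Lemma compact_uniformly_continuous (Z : Type) (dZ : Z -> Z -> R) (g : Y -> Z) :
  is_metric dZ -> continuous_metric d dZ g ->
  forall eps, 0 < eps -> exists eta, 0 < eta /\
    forall x y, d x y < eta -> dZ (g x) (g y) < eps.
Proof.
  intros HZ Hg eps he. apply NNPP. intro Hn.
  destruct (counterexample_sequence (fun k (p : Y * Y) => d (fst p) (snd p) < / INR (S k))
              (fun p => dZ (g (fst p)) (g (snd p)) < eps)) as [s Hs].
  { intros [k Hk]. apply Hn. exists (/ INR (S k)). split; [apply inv_INR_S_pos|].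
    intros x y. exact (Hk (x, y)). }
  destruct (compact_cluster_point (fun k => fst (s k))) as [a Ha].
  destruct (Hg a (eps / 2)) as [r [hr Hr]]; [lra|].
  destruct (inv_INR_S_eventually_lt (r / 2)) as [K HK]; [lra|].
  destruct (Ha (r / 2) ltac:(lra) K) as [k [hk Hak]].
  destruct (Hs k) as [Hclose Hfar]. apply Hfar.
  pose proof (HK k hk).
  pose proof (dist_triangle Hd a (fst (s k)) (snd (s k))).
  assert (A1 := Hr (fst (s k)) ltac:(lra)).
  assert (A2 := Hr (snd (s k)) ltac:(lra)).
  pose proof (dist_triangle HZ (g (fst (s k))) (g a) (g (snd (s k)))).
  rewrite (dist_sym HZ (g (fst (s k))) (g a)) in *. lra.
Qed.

End CompactMetric.

Section ProductDiagonal.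
Variables (T : nat -> Type) (d : forall n, T n -> T n -> R).
Hypotheses (Hmet : forall n, is_metric (d n)) (Hcpt : forall n, compact_metric (d n)).
Variable y : nat -> forall n, T n.

Definition stage_select (N : nat) (v : nat -> T N) : (nat -> nat) * T N :=
  proj1_sig (compact_approx_subseq (T N) (d N) (Hmet N) (Hcpt N) v).

(* [y (diag_index N j)] converges at every coordinate below [N], coordinate [n]
   having been made to converge to [diag_point n] at stage [n + 1]. *)
Fixpoint diag_index (N : nat) : nat -> nat :=
  match N with
  | O => fun j => j
  | S N' => fun j =>
      diag_index N' (fst (stage_select N' (fun i => y (diag_index N' i) N')) j)
  end.

Definition diag_point (N : nat) : T N :=
  snd (stage_select N (fun i => y (diag_index N i) N)).

Lemma stage_select_spec (N : nat) (v : nat -> T N) (j : nat) :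
  (j <= fst (stage_select N v) j)%nat /\
  d N (snd (stage_select N v)) (v (fst (stage_select N v) j)) < / INR (S j).
Proof. exact (proj2_sig (compact_approx_subseq _ _ (Hmet N) (Hcpt N) v) j). Qed.

Lemma diag_point_spec (N j : nat) :
  d N (diag_point N) (y (diag_index (S N) j) N) < / INR (S j).
Proof. exact (proj2 (stage_select_spec N _ j)). Qed.

Lemma diag_index_refine (m N j : nat) :
  exists j', (j <= j')%nat /\ diag_index (m + N) j = diag_index N j'.
Proof.
  revert j. induction m as [|m IH]; intro j.
  - exists j. auto.
  - set (v := fun i => y (diag_index (m + N) i) (m + N)).
    destruct (IH (fst (stage_select (m + N) v) j)) as [j' [hj' Hj']].
    exists j'. split; [|exact Hj'].
    pose proof (proj1 (stage_select_spec (m + N) v j)). lia.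
Qed.

Lemma product_diagonal_subseq :
  exists (phi : nat -> nat) (a : forall n, T n), forall j,
    (j <= phi j)%nat /\ forall N, (N <= j)%nat -> d N (a N) (y (phi j) N) < / INR (S j).
Proof.
  exists (fun j => diag_index (S j) j), diag_point. intro j. split.
  - destruct (diag_index_refine (S j) 0 j) as [j' [hj' Hj']].
    rewrite Nat.add_0_r in Hj'. rewrite Hj'. exact hj'.
  - intros N hN. destruct (diag_index_refine (j - N) (S N) j) as [j' [hj' Hj']].
    replace (j - N + S N)%nat with (S j) in Hj' by lia. rewrite Hj'.
    pose proof (diag_point_spec N j'). pose proof (inv_INR_S_le j j' hj'). lra.
Qed.

End ProductDiagonal.

Section InverseSequence.
Variables (T : nat -> Type) (d : forall n, T n -> T n -> R) (pi : forall n, T (S n) -> T n).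
Hypotheses (Hmet : forall n, is_metric (d n)) (Hcpt : forall n, compact_metric (d n))
  (Hpi : forall n, continuous_metric (d (S n)) (d n) (pi n)).

Definition partial_thread (M : nat) (y : forall n, T n) : Prop :=
  forall n, (n < M)%nat -> pi n (y (S n)) = y n.

Lemma partial_thread_le (m M : nat) (y : forall n, T n) :
  (m <= M)%nat -> partial_thread M y -> partial_thread m y.
Proof. intros hm Hy n hn. apply Hy. lia. Qed.

Lemma inv_lim_partial_thread (M : nat) (y : forall n, T n) :
  inv_lim pi y -> partial_thread M y.
Proof. intros Hy n _. apply Hy. Qed.

Lemma partial_threads_limit_thread (y : nat -> forall n, T n) (phi : nat -> nat)
    (a : forall n, T n) :
  (forall k, partial_thread k (y k)) ->
  (forall j, (j <= phi j)%nat /\ forall N, (N <= j)%nat -> d N (a N) (y (phi j) N) < / INR (S j)) ->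
  inv_lim pi a.
Proof.
  intros Hy Hphi N. symmetry. apply (dist_eq0 (Hmet N)).
  apply Rle_antisym; [|apply (dist_nonneg (Hmet N))].
  apply Rnot_lt_le. intro he.
  set (e := d N (a N) (pi N (a (S N)))) in *.
  destruct (Hpi N (a (S N)) (e / 2)) as [r [hr Hr]]; [lra|].
  destruct (inv_INR_S_eventually_lt (Rmin r (e / 2))) as [K HK]; [apply Rmin_glb_lt; lra|].
  set (j := Nat.max K (S N)).
  destruct (Hphi j) as [hj Hj].
  pose proof (HK j ltac:(lia)). pose proof (Rmin_l r (e / 2)). pose proof (Rmin_r r (e / 2)).
  pose proof (Hj N ltac:(lia)) as HN.
  assert (HSN := Hr (y (phi j) (S N)) ltac:(pose proof (Hj (S N) ltac:(lia)); lra)).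
  rewrite (Hy (phi j) N) in HSN by lia.
  pose proof (dist_triangle (Hmet N) (a N) (y (phi j) N) (pi N (a (S N)))).
  rewrite (dist_sym (Hmet N) (y (phi j) N)) in *. unfold e in *. lra.
Qed.

Lemma partial_threads_cluster (y : nat -> forall n, T n) :
  (forall k, partial_thread k (y k)) ->
  exists a, inv_lim pi a /\ forall e, 0 < e -> forall K N,
    exists k, (K <= k)%nat /\ forall i, (i <= N)%nat -> d i (a i) (y k i) < e.
Proof.
  intro Hy. destruct (product_diagonal_subseq T d Hmet Hcpt y) as [phi [a Hphi]].
  exists a. split; [exact (partial_threads_limit_thread y phi a Hy Hphi)|].
  intros e he K N. destruct (inv_INR_S_eventually_lt e he) as [K0 HK0].
  set (j := Nat.max K (Nat.max N K0)).
  destruct (Hphi j) as [hj Hj]. exists (phi j). split; [lia|].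
  intros i hi. pose proof (Hj i ltac:(lia)). pose proof (HK0 j ltac:(lia)). lra.
Qed.

Lemma partial_thread_close_below (N : nat) (e : R) :
  0 < e -> exists e', 0 < e' /\ forall y z, partial_thread N y -> partial_thread N z ->
    d N (y N) (z N) < e' -> forall i, (i <= N)%nat -> d i (y i) (z i) < e.
Proof.
  intro he. induction N as [|N IH].
  - exists e. split; [exact he|]. intros y z _ _ Hyz i hi.
    replace i with 0%nat by lia. exact Hyz.
  - destruct IH as [e1 [he1 H1]].
    destruct (compact_uniformly_continuous _ _ (Hmet (S N)) (Hcpt (S N)) _ _ (pi N)
                (Hmet N) (Hpi N) e1 he1) as [e2 [he2 H2]].
    exists (Rmin e e2). split; [apply Rmin_glb_lt; assumption|].
    intros y z Hy Hz Hyz i hi.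
    pose proof (Rmin_l e e2). pose proof (Rmin_r e e2).
    destruct (Nat.eq_dec i (S N)) as [->|hne]; [lra|].
    apply H1; [apply (partial_thread_le N (S N)); auto; lia ..
              | rewrite <- (Hy N), <- (Hz N) by lia; apply H2; lra | lia].
Qed.

Definition fupdate (y : forall n, T n) (m : nat) (w : T m) : forall n, T n :=
  fun n => match Nat.eq_dec m n with
           | left h => eq_rect m T w n h
           | right _ => y n
           end.

Lemma fupdate_eq (y : forall n, T n) (m : nat) (w : T m) : fupdate y m w m = w.
Proof.
  unfold fupdate. destruct (Nat.eq_dec m m) as [h|h]; [|congruence].
  symmetry. apply eq_rect_eq_dec. exact Nat.eq_dec.
Qed.

Lemma fupdate_neq (y : forall n, T n) (m : nat) (w : T m) (n : nat) :
  m <> n -> fupdate y m w n = y n.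
Proof. intro h. unfold fupdate. destruct (Nat.eq_dec m n); congruence. Qed.

Lemma partial_thread_through (x0 : forall n, T n) (M : nat) (w : T M) :
  exists y, partial_thread M y /\ y M = w.
Proof.
  revert w. induction M as [|M IH]; intro w.
  - exists (fupdate x0 0 w). split; [intros n hn; lia | apply fupdate_eq].
  - destruct (IH (pi M w)) as [y [Hy HyM]].
    exists (fupdate y (S M) w). split; [|apply fupdate_eq].
    intros n hn. rewrite (fupdate_neq y (S M) w n) by lia.
    destruct (Nat.eq_dec n M) as [->|hne].
    + rewrite fupdate_eq. symmetry. exact HyM.
    + rewrite fupdate_neq by lia. apply Hy. lia.
Qed.

(* Otherwise a cluster point of partial threads of growing length, each [e]-far
   at level [N] from every thread, would be a thread [e]-far from itself. *)
Lemma partial_thread_near_thread (N : nat) (e : R) :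
  0 < e -> exists M, (N <= M)%nat /\ forall y, partial_thread M y ->
    exists z, inv_lim pi z /\ d N (z N) (y N) < e.
Proof.
  intro he. apply NNPP. intro Hn.
  destruct (counterexample_sequence (fun k y => partial_thread (k + N) y)
              (fun y => exists z, inv_lim pi z /\ d N (z N) (y N) < e)) as [s Hs].
  { intros [k Hk]. apply Hn. exists (k + N)%nat. split; [lia | exact Hk]. }
  destruct (partial_threads_cluster s) as [a [Ha Hcl]].
  { intro k. apply (partial_thread_le k (k + N)); [lia | apply Hs]. }
  destruct (Hcl e he 0%nat N) as [k [_ Hk]].
  apply (proj2 (Hs k)). exists a. split; [exact Ha | exact (Hk N (le_n N))].
Qed.

End InverseSequence.

Section InverseLimit.
Variables (T : nat -> Type) (d : forall n, T n -> T n -> R)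
  (f : forall n, T n -> T n) (pi : forall n, T (S n) -> T n)
  (D : (forall n, T n) -> (forall n, T n) -> R).
Hypotheses (Hmet : forall n, is_metric (d n)) (Hcpt : forall n, compact_metric (d n))
  (Hf : forall n, continuous_metric (d n) (d n) (f n))
  (Hpi : forall n, continuous_metric (d (S n)) (d n) (pi n))
  (Hcomm : forall n (x : T (S n)), f n (pi n x) = pi n (f (S n) x))
  (HD : is_metric_on (inv_lim pi) D)
  (HDtop : induces_product_topology d (inv_lim pi) D).

Lemma lim_map_partial_thread (M : nat) (y : forall n, T n) :
  partial_thread T pi M y -> partial_thread T pi M (lim_map f y).
Proof. intros Hy n hn. unfold lim_map. rewrite <- Hcomm, Hy; auto. Qed.

Lemma lim_map_inv_lim (y : forall n, T n) : inv_lim pi y -> inv_lim pi (lim_map f y).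
Proof. intros Hy n. unfold lim_map. rewrite <- Hcomm, Hy. reflexivity. Qed.

Lemma D_ball_in_coord_ball (a : forall n, T n) (n : nat) (e : R) :
  inv_lim pi a -> 0 < e -> exists r, 0 < r /\
    forall z, inv_lim pi z -> D a z < r -> d n (a n) (z n) < e.
Proof.
  intros Ha he.
  set (U := fun z => inv_lim pi z /\ d n (a n) (z n) < e).
  assert (HU : prod_open_on d (inv_lim pi) U).
  { intros x [Hx hx]. exists n, (e - d n (a n) (x n)). split; [lra|].
    intros z Hz Hxz. split; [exact Hz|].
    pose proof (Hxz n (le_n n)). pose proof (dist_triangle (Hmet n) (a n) (x n) (z n)). lra. }
  destruct (proj2 (HDtop U (fun z Hz => proj1 Hz)) HU a) as [r [hr Hr]].
  { split; [exact Ha|]. rewrite (dist_refl (Hmet n)). exact he. }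
  exists r. split; [exact hr|]. intros z Hz Haz. exact (proj2 (Hr z Hz Haz)).
Qed.

Lemma coord_ball_in_D_ball (a : forall n, T n) (r : R) :
  inv_lim pi a -> 0 < r -> exists N e, 0 < e /\ forall z, inv_lim pi z ->
    (forall i, (i <= N)%nat -> d i (a i) (z i) < e) -> D a z < r.
Proof.
  intros Ha hr.
  set (U := fun z => inv_lim pi z /\ D a z < r).
  assert (HU : metric_open_on (inv_lim pi) D U).
  { intros x [Hx hx]. exists (r - D a x). split; [lra|].
    intros z Hz Hxz. split; [exact Hz|].
    pose proof (dist_on_triangle HD a x z Ha Hx Hz). lra. }
  destruct (proj1 (HDtop U (fun z Hz => proj1 Hz)) HU a) as [N [e [he He]]].
  { split; [exact Ha|]. rewrite (dist_on_refl HD a Ha). exact hr. }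
  exists N, e. split; [exact he|]. intros z Hz Haz. exact (proj2 (He z Hz Haz)).
Qed.

Lemma coord_uniformly_continuous (n : nat) (eps : R) :
  0 < eps -> exists eta, 0 < eta /\ forall y z, inv_lim pi y -> inv_lim pi z ->
    D y z < eta -> d n (y n) (z n) < eps.
Proof.
  intro he. apply NNPP. intro Hn.
  destruct (counterexample_sequence
              (fun k (p : (forall n, T n) * (forall n, T n)) =>
                 inv_lim pi (fst p) /\ inv_lim pi (snd p) /\ D (fst p) (snd p) < / INR (S k))
              (fun p => d n (fst p n) (snd p n) < eps)) as [s Hs].
  { intros [k Hk]. apply Hn. exists (/ INR (S k)). split; [apply inv_INR_S_pos|].
    intros y z Hy Hz Hyz. exact (Hk (y, z) (conj Hy (conj Hz Hyz))). }
  destruct (partial_threads_cluster T d pi Hmet Hcpt Hpi (fun k => fst (s k))) as [a [Ha Hcl]].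
  { intro k. apply inv_lim_partial_thread, (Hs k). }
  destruct (D_ball_in_coord_ball a n (eps / 2) Ha) as [r [hr Hr]]; [lra|].
  destruct (coord_ball_in_D_ball a (r / 2) Ha) as [N [e [he' He]]]; [lra|].
  destruct (inv_INR_S_eventually_lt (r / 2)) as [K HK]; [lra|].
  destruct (Hcl e he' K N) as [k [hk Hk]].
  destruct (Hs k) as [[Hy [Hz Hyz]] Hfar]. apply Hfar.
  pose proof (HK k hk).
  assert (Hay := He _ Hy Hk).
  pose proof (dist_on_triangle HD a (fst (s k)) (snd (s k)) Ha Hy Hz).
  assert (A1 := Hr _ Hy ltac:(lra)).
  assert (A2 := Hr _ Hz ltac:(lra)).
  pose proof (dist_triangle (Hmet n) (fst (s k) n) (a n) (snd (s k) n)).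
  rewrite (dist_sym (Hmet n) (fst (s k) n) (a n)) in *. lra.
Qed.

Lemma D_uniformly_controlled_by_coords (r : R) :
  0 < r -> exists N e, 0 < e /\ forall y z, inv_lim pi y -> inv_lim pi z ->
    (forall i, (i <= N)%nat -> d i (y i) (z i) < e) -> D y z < r.
Proof.
  intro hr. apply NNPP. intro Hn.
  destruct (counterexample_sequence
              (fun k (p : (forall n, T n) * (forall n, T n)) =>
                 inv_lim pi (fst p) /\ inv_lim pi (snd p) /\
                 forall i, (i <= k)%nat -> d i (fst p i) (snd p i) < / INR (S k))
              (fun p => D (fst p) (snd p) < r)) as [s Hs].
  { intros [k Hk]. apply Hn. exists k, (/ INR (S k)). split; [apply inv_INR_S_pos|].
    intros y z Hy Hz Hyz. exact (Hk (y, z) (conj Hy (conj Hz Hyz))). }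
  destruct (partial_threads_cluster T d pi Hmet Hcpt Hpi (fun k => fst (s k))) as [a [Ha Hcl]].
  { intro k. apply inv_lim_partial_thread, (Hs k). }
  destruct (coord_ball_in_D_ball a (r / 2) Ha) as [N [e [he He]]]; [lra|].
  destruct (inv_INR_S_eventually_lt (e / 2)) as [K HK]; [lra|].
  destruct (Hcl (e / 2) ltac:(lra) (Nat.max K N) N) as [k [hk Hk]].
  destruct (Hs k) as [[Hy [Hz Hyz]] Hfar]. apply Hfar.
  pose proof (HK k ltac:(lia)).
  assert (A1 := He _ Hy ltac:(intros i hi; pose proof (Hk i hi); lra)).
  assert (A2 : D a (snd (s k)) < r / 2).
  { apply He; [exact Hz|]. intros i hi.
    pose proof (Hk i hi). pose proof (Hyz i ltac:(lia)).
    pose proof (dist_triangle (Hmet i) (a i) (fst (s k) i) (snd (s k) i)). lra. }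
  pose proof (dist_on_triangle HD (fst (s k)) a (snd (s k)) Hy Ha Hz).
  rewrite (dist_on_sym HD (fst (s k)) a Hy Ha) in *. lra.
Qed.

Lemma D_uniformly_controlled_by_level (r : R) :
  0 < r -> exists N e, 0 < e /\ forall y z, inv_lim pi y -> inv_lim pi z ->
    d N (y N) (z N) < e -> D y z < r.
Proof.
  intro hr. destruct (D_uniformly_controlled_by_coords r hr) as [N [e [he H]]].
  destruct (partial_thread_close_below T d pi Hmet Hcpt Hpi N e he) as [e' [he' H']].
  exists N, e'. split; [exact he'|]. intros y z Hy Hz Hyz.
  apply H; [exact Hy | exact Hz |].
  apply H'; [apply inv_lim_partial_thread; assumption .. | exact Hyz].
Qed.

Lemma CR_coord_of_CR_inv_lim (x : forall n, T n) (n : nat) :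
  CR_on (inv_lim pi) D (lim_map f) x -> CR (d n) (f n) (x n).
Proof.
  intros [Hx Hchain]. split; [exact I|]. intros delta hd.
  destruct (coord_uniformly_continuous n delta hd) as [eta [heta Heta]].
  destruct (Hchain (eta / 2)) as [k [c [hk [Hc [c0 [ck Hstep]]]]]]; [lra|].
  exists k, (fun i => c i n). split; [exact hk|]. split; [intros; exact I|].
  split; [rewrite c0; reflexivity|]. split; [rewrite ck; reflexivity|].
  intros i hi. left.
  apply (Heta (lim_map f (c i)) (c (S i))).
  - apply lim_map_inv_lim, Hc. lia.
  - apply Hc. lia.
  - pose proof (Hstep i hi). lra.
Qed.

Definition level_chain (N : nat) (e : R) (x : forall n, T n) : Prop :=
  exists (k : nat) (z : nat -> forall n, T n),
    (0 < k)%nat /\ (forall i, inv_lim pi (z i)) /\ z 0%nat = x /\ z k = x /\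
    forall i, (i < k)%nat -> d N (f N (z i N)) (z (S i) N) < e.

Lemma CR_inv_lim_of_level_chains (x : forall n, T n) :
  inv_lim pi x -> (forall N e, 0 < e -> level_chain N e x) ->
  CR_on (inv_lim pi) D (lim_map f) x.
Proof.
  intros Hx Hlevel. split; [exact Hx|]. intros delta hd.
  destruct (D_uniformly_controlled_by_level delta hd) as [N [e [he He]]].
  destruct (Hlevel N e he) as [k [z [hk [Hz [z0 [zk Hstep]]]]]].
  exists k, z. repeat split; auto. intros i hi. left.
  apply He; [apply lim_map_inv_lim, Hz | apply Hz | apply Hstep, hi].
Qed.

Lemma partial_thread_chain_of_CR (x : forall n, T n) (N M : nat) (r : R) :
  inv_lim pi x -> CR (d M) (f M) (x M) -> (N <= M)%nat -> 0 < r ->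
  exists (k : nat) (y : nat -> forall n, T n), (0 < k)%nat /\
    (forall i, partial_thread T pi M (y i)) /\
    d N (x N) (y 0%nat N) < r /\ d N (x N) (y k N) < r /\
    forall i, (i < k)%nat -> d N (f N (y i N)) (y (S i) N) < r.
Proof.
  intros Hx [_ HCR] hM hr.
  destruct (partial_thread_close_below T d pi Hmet Hcpt Hpi M r hr) as [e [he Hbelow]].
  destruct (HCR (e / 2)) as [k [c [hk [_ [c0 [ck Hc]]]]]]; [lra|].
  destruct (functional_choice (fun i y => partial_thread T pi M y /\ y M = c i)) as [y Hy].
  { intro i. apply partial_thread_through. exact x. }
  assert (Hx_near : forall i, c i = x M -> d N (x N) (y i N) < r).
  { intros i hci. destruct (Hy i) as [Hyi HyiM].
    apply (Hbelow x (y i) (inv_lim_partial_thread T pi M x Hx) Hyi); [|exact hM].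
    rewrite HyiM, hci, (dist_refl (Hmet M)). lra. }
  exists k, y. split; [exact hk|]. split; [intro i; apply (Hy i)|].
  split; [apply Hx_near, c0|]. split; [apply Hx_near, ck|].
  intros i hi. destruct (Hy i) as [Hyi HyiM]. destruct (Hy (S i)) as [HySi HySiM].
  apply (Hbelow (lim_map f (y i)) (y (S i)) (lim_map_partial_thread M _ Hyi) HySi); [|exact hM].
  unfold lim_map. rewrite HyiM, HySiM. pose proof (Hc i hi). lra.
Qed.

(* Each partial thread of the chain is replaced by a nearby thread, the
   endpoints by [x] itself. *)
Lemma level_chain_of_CR_coords (x : forall n, T n) :
  inv_lim pi x -> (forall n, CR (d n) (f n) (x n)) ->
  forall N e, 0 < e -> level_chain N e x.
Proof.
  intros Hx HCR N e he.
  destruct (compact_uniformly_continuous _ _ (Hmet N) (Hcpt N) _ _ (f N) (Hmet N) (Hf N) (e / 3))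
    as [e1 [he1 Hf1]]; [lra|].
  set (r := Rmin (e / 3) e1).
  assert (hr : 0 < r) by (apply Rmin_glb_lt; lra).
  assert (hr3 : r <= e / 3) by apply Rmin_l.
  assert (hr1 : r <= e1) by apply Rmin_r.
  destruct (partial_thread_near_thread T d pi Hmet Hcpt Hpi N r hr) as [M [hM Hnear]].
  destruct (partial_thread_chain_of_CR x N M r Hx (HCR M) hM hr)
    as [k [y [hk [Hy [Hy0 [Hyk Hstep]]]]]].
  assert (Hz : forall i, exists z, inv_lim pi z /\ d N (z N) (y i N) < r /\
                 ((i = 0 \/ i = k)%nat -> z = x)).
  { intro i. destruct (classic (i = 0 \/ i = k)%nat) as [hi|hi].
    - exists x. split; [exact Hx|]. split; [|reflexivity].
      destruct hi as [-> | ->]; assumption.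
    - destruct (Hnear (y i) (Hy i)) as [z [Hz Hzy]].
      exists z. split; [exact Hz|]. split; [exact Hzy|]. intro; contradiction. }
  destruct (functional_choice _ Hz) as [z Hzs].
  exists k, z. split; [exact hk|]. split; [intro i; apply (Hzs i)|].
  split; [apply (Hzs 0%nat); auto|]. split; [apply (Hzs k); auto|].
  intros i hi. destruct (Hzs i) as [_ [Hzi _]]. destruct (Hzs (S i)) as [_ [HzSi _]].
  pose proof (Hf1 (z i N) (y i N) ltac:(lra)). pose proof (Hstep i hi).
  pose proof (dist_triangle (Hmet N) (f N (z i N)) (f N (y i N)) (y (S i) N)).
  pose proof (dist_triangle (Hmet N) (f N (z i N)) (y (S i) N) (z (S i) N)).
  rewrite (dist_sym (Hmet N) (y (S i) N) (z (S i) N)) in *. lra.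
Qed.

End InverseLimit.

Theorem lemma3p1 (T : nat -> Type) (d : forall n, T n -> T n -> R)
  (f : forall n, T n -> T n) (pi : forall n, T (S n) -> T n)
  (Hmet : forall n, is_metric (d n))
  (Hcpt : forall n, compact_metric (d n))
  (Hf : forall n, continuous_metric (d n) (d n) (f n))
  (Hpi : forall n, continuous_metric (d (S n)) (d n) (pi n))
  (Hcomm : forall n (x : T (S n)), f n (pi n x) = pi n (f (S n) x))
  (D : (forall n, T n) -> (forall n, T n) -> R)
  (HD : is_metric_on (inv_lim pi) D)
  (HDtop : induces_product_topology d (inv_lim pi) D) :
  forall x : forall n, T n,
    CR_on (inv_lim pi) D (lim_map f) x <->
    (inv_lim pi x /\ forall n, CR (d n) (f n) (x n)).
Proof.
  intro x. split.
  - intro Hx. split; [exact (proj1 Hx)|]. intro n.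
    eapply CR_coord_of_CR_inv_lim; eassumption.
  - intros [Hx HCR]. eapply CR_inv_lim_of_level_chains; try eassumption.
    eapply level_chain_of_CR_coords; eassumption.
Qed.
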